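(* Let $(X_i)_{i\ge1}$ be a sequence in $\mathcal{H}_{\mbox{s-conv}}(S^n)$ converging in the Pompeiu-Hausdorff metric to $X\in\mathcal{H}(S^n)$. Then $X=X^{\circ\circ}$.
   Context: $S^n$ is the unit sphere in $\mathbb{R}^{n+1}$, $n\ge1$; $|PQ|=\arccos(P\cdot Q)$. $H(P)=\{Q\in S^n:P\cdot Q\ge0\}$ and $W^\circ=\bigcap_{P\in W}H(P)$, $W^{\circ\circ}=(W^\circ)^\circ$. $\mathcal{H}(S^n)$ is the set of non-empty closed subsets of $S^n$ with the Pompeiu-Hausdorff metric $h(A,B)=\max\{\max_{x\in A}\min_{y\in B}|xy|,\ \max_{y\in B}\min_{x\in A}|xy|\}$. A subset is hemispherical if it is disjoint from $H(P)$ for some $P\in S^n$. For $P,Q$ in a hemispherical set, the arc $PQ=\{((1-t)P+tQ)/\|(1-t)P+tQ\|:0\le t\le1\}$; a hemispherical set $W$ is spherical convex if $PQ\subset W$ for all $P,Q\in W$. $\mathcal{H}_{\mbox{s-conv}}(S^n)$ is the set of non-empty closed spherical convex subsets of $S^n$. *)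

From Stdlib Require Import Reals Lra Lia.
Open Scope R_scope.

(* Points of R^{n+1} are represented as functions nat -> R;
   only coordinates 0..n matter, and points of S^n are required to vanish
   beyond index n (so each point of S^n has a unique representative). *)
Definition vec := nat -> R.

Definition dot (n : nat) (P Q : vec) : R := sum_f_R0 (fun i => P i * Q i) n.

Definition vnorm (n : nat) (P : vec) : R := sqrt (dot n P P).

Definition sphere (n : nat) (P : vec) : Prop :=
  (forall i : nat, (n < i)%nat -> P i = 0) /\ dot n P P = 1.

Definition sdist (n : nat) (P Q : vec) : R := acos (dot n P Q).

Definition vset := vec -> Prop.

Definition subset_sphere (n : nat) (W : vset) : Prop :=
  forall P, W P -> sphere n P.

Definition hemi (n : nat) (P : vec) : vset :=
  fun Q => sphere n Q /\ dot n P Q >= 0.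

(* W° = intersection over P in W of H(P) (= S^n if W is empty). *)
Definition polar (n : nat) (W : vset) : vset :=
  fun Q => sphere n Q /\ forall P, W P -> hemi n P Q.

Definition closed_in_sphere (n : nat) (A : vset) : Prop :=
  subset_sphere n A /\
  forall (x : nat -> vec) (y : vec),
    (forall k, A (x k)) -> sphere n y ->
    (forall eps, eps > 0 -> exists N, forall k, (k >= N)%nat -> sdist n (x k) y < eps) ->
    A y.

Definition in_HS (n : nat) (A : vset) : Prop :=
  (exists P, A P) /\ closed_in_sphere n A.

Definition hemispherical (n : nat) (W : vset) : Prop :=
  exists P, sphere n P /\ forall Q, W Q -> ~ hemi n P Q.

Definition arc (n : nat) (P Q : vec) : vset :=
  fun R0 => exists t, 0 <= t <= 1 /\
    R0 = (fun i => ((1 - t) * P i + t * Q i) /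
                   vnorm n (fun j => (1 - t) * P j + t * Q j)).

Definition spherical_convex (n : nat) (W : vset) : Prop :=
  subset_sphere n W /\ hemispherical n W /\
  forall P Q, W P -> W Q -> forall R0, arc n P Q R0 -> W R0.

Definition in_Hsconv (n : nat) (A : vset) : Prop :=
  in_HS n A /\ spherical_convex n A.

(* h(A,B) <= eps, for non-empty closed (hence compact) subsets of S^n,
   where the max/min in the definition of h are attained. *)
Definition hausdorff_le (n : nat) (A B : vset) (eps : R) : Prop :=
  (forall x, A x -> exists y, B y /\ sdist n x y <= eps) /\
  (forall y, B y -> exists x, A x /\ sdist n x y <= eps).

Definition hausdorff_converges (n : nat) (Xs : nat -> vset) (X : vset) : Prop :=
  forall eps, eps > 0 -> exists N, forall i, (i >= N)%nat -> hausdorff_le n (Xs i) X eps.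

From Stdlib Require Import Reals Lra Lia Classical ClassicalEpsilon.
Open Scope R_scope.

(* If [Q] is not in [X], let [x0] maximize [x |-> Q . x] on the compact set [X] and
   [c = Q . x0 < 1].  For [x] in [X], the normalized points of the arc from [x0] to [x]
   are limits of arc points of the convex sets [X_i], hence [Q . _ <= c] along that arc,
   with equality at [x0]; differentiating at [x0] gives [Q . x <= c (x0 . x)] when
   [c > 0].  So the unit vector along [max(c,0) x0 - Q] lies in [X°] but has negative
   product with [Q], i.e. [Q] is not in [X°°]. *)

Lemma dot_comm n P Q : dot n P Q = dot n Q P.
Proof. unfold dot; induction n as [|n IH]; simpl; [|rewrite IH]; ring. Qed.

Lemma dot_lincomb_r n A a P b Q :
  dot n A (fun j => a * P j + b * Q j) = a * dot n A P + b * dot n A Q.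
Proof. unfold dot; induction n as [|n IH]; simpl; [|rewrite IH]; ring. Qed.

Lemma dot_lincomb_l n a P b Q A :
  dot n (fun j => a * P j + b * Q j) A = a * dot n P A + b * dot n Q A.
Proof. rewrite dot_comm, dot_lincomb_r, !(dot_comm n A); reflexivity. Qed.

Lemma dot_div_r n A P r : dot n A (fun j => P j / r) = dot n A P / r.
Proof. unfold dot, Rdiv; induction n as [|n IH]; simpl; [|rewrite IH]; ring. Qed.

Lemma dot_self_nonneg n P : 0 <= dot n P P.
Proof. apply cond_pos_sum; intro j; apply Rle_0_sqr. Qed.

(* Cauchy-Schwarz against a unit vector: expand 0 <= |v - (A.v) A|^2. *)
Lemma dot_unit_sq_le n A v : dot n A A = 1 -> (dot n A v) ^ 2 <= dot n v v.
Proof.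
  intros HA. set (l := dot n A v).
  pose proof (dot_self_nonneg n (fun j => 1 * v j + - l * A j)) as H.
  rewrite dot_lincomb_l, !dot_lincomb_r, HA, (dot_comm n v A) in H.
  fold l in H. nra.
Qed.

Lemma dot_sphere_bound n x y : sphere n x -> sphere n y -> -1 <= dot n x y <= 1.
Proof.
  intros [_ Hx] [_ Hy]. pose proof (dot_unit_sq_le n x y Hx) as H. rewrite Hy in H.
  split; nra.
Qed.

Lemma dot_diff_sq_le n A x y :
  dot n A A = 1 -> sphere n x -> sphere n y ->
  (dot n A x - dot n A y) ^ 2 <= 2 * (1 - dot n x y).
Proof.
  intros HA [_ Hx] [_ Hy].
  pose proof (dot_unit_sq_le n A (fun j => 1 * x j + -1 * y j) HA) as H.
  rewrite dot_lincomb_l, !dot_lincomb_r, Hx, Hy, (dot_comm n y x) in H. lra.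
Qed.

Lemma sum_f_R0_term_le (f : nat -> R) m j :
  (forall k, 0 <= f k) -> (j <= m)%nat -> f j <= sum_f_R0 f m.
Proof.
  intros Hf Hj. induction m as [|m IH]; simpl.
  - replace j with 0%nat by lia. lra.
  - destruct (Nat.eq_dec j (S m)) as [->|Hne].
    + pose proof (cond_pos_sum f m Hf). lra.
    + pose proof (Hf (S m)). assert (f j <= sum_f_R0 f m) by (apply IH; lia). lra.
Qed.

Lemma sphere_coord_bound n x j : sphere n x -> Rabs (x j) <= 1.
Proof.
  intros [Hz Hx]. apply Rabs_le. destruct (Compare_dec.le_lt_dec j n) as [Hj|Hj].
  - pose proof (sum_f_R0_term_le (fun i => x i * x i) n j (fun i => Rle_0_sqr (x i)) Hj).
    fold (dot n x x) in H. nra.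
  - rewrite Hz by exact Hj. lra.
Qed.

Definition normalize n (V : vec) : vec := fun j => V j / vnorm n V.

Lemma sphere_normalize n V :
  (forall i, (n < i)%nat -> V i = 0) -> 0 < dot n V V -> sphere n (normalize n V).
Proof.
  intros Hz HV. unfold normalize. split.
  - intros i Hi. rewrite Hz by exact Hi. unfold Rdiv; ring.
  - rewrite dot_div_r, dot_comm, dot_div_r.
    unfold vnorm. pose proof (sqrt_lt_R0 _ HV) as Hpos.
    rewrite <- (sqrt_sqrt (dot n V V)) at 1 by lra. field. lra.
Qed.

Definition mix_norm2 (t b : R) : R := (1 - t) ^ 2 + t ^ 2 + 2 * t * (1 - t) * b.

Lemma mix_norm2_pos t b : 0 <= t < 1/2 -> -1 <= b -> 0 < mix_norm2 t b.
Proof.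
  intros Ht Hb. unfold mix_norm2.
  replace ((1 - t) ^ 2 + t ^ 2 + 2 * t * (1 - t) * b)
    with ((1 - 2 * t) ^ 2 + 2 * (t * (1 - t) * (b + 1))) by ring.
  assert (0 <= t * (1 - t) * (b + 1)) by (apply Rmult_le_pos; [apply Rmult_le_pos|]; lra).
  assert (0 < (1 - 2 * t) ^ 2) by (apply pow_lt; lra).
  lra.
Qed.

Lemma mix_norm2_bounds t b : 0 <= t <= 1 -> -1 <= b <= 1 -> 0 <= mix_norm2 t b <= 1.
Proof.
  intros Ht Hb. unfold mix_norm2. split.
  - replace ((1 - t) ^ 2 + t ^ 2 + 2 * t * (1 - t) * b)
      with ((1 - 2 * t) ^ 2 + 2 * (t * (1 - t) * (b + 1))) by ring.
    assert (0 <= t * (1 - t) * (b + 1)) by (apply Rmult_le_pos; [apply Rmult_le_pos|]; lra).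
    pose proof (pow2_ge_0 (1 - 2 * t)). lra.
  - replace ((1 - t) ^ 2 + t ^ 2 + 2 * t * (1 - t) * b)
      with (1 - 2 * (t * (1 - t) * (1 - b))) by ring.
    assert (0 <= t * (1 - t) * (1 - b)) by (apply Rmult_le_pos; [apply Rmult_le_pos|]; lra).
    lra.
Qed.

Lemma dot_normalize_mix n A P Q t :
  dot n P P = 1 -> dot n Q Q = 1 ->
  dot n A (normalize n (fun j => (1 - t) * P j + t * Q j))
  = ((1 - t) * dot n A P + t * dot n A Q) / sqrt (mix_norm2 t (dot n P Q)).
Proof.
  intros HP HQ. unfold normalize, vnorm.
  rewrite dot_div_r, dot_lincomb_r, dot_lincomb_l, !dot_lincomb_r, HP, HQ, (dot_comm n Q P).
  unfold mix_norm2. f_equal. f_equal. ring.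
Qed.

Lemma cos_le_dot_of_sdist_le n x y e :
  sphere n x -> sphere n y -> 0 <= e <= PI -> sdist n x y <= e -> cos e <= dot n x y.
Proof.
  intros Hx Hy He Hs. pose proof (dot_sphere_bound n x y Hx Hy) as Hb.
  pose proof (acos_bound (dot n x y)). unfold sdist in Hs.
  rewrite <- (cos_acos (dot n x y)) by exact Hb.
  destruct (Req_dec (acos (dot n x y)) e) as [<-|Hne]; [lra|].
  left. apply cos_decreasing_1; lra.
Qed.

Lemma sdist_lt_of_cos_lt n x y e :
  sphere n x -> sphere n y -> 0 < e <= PI -> cos e < dot n x y -> sdist n x y < e.
Proof.
  intros Hx Hy He Hc. pose proof (dot_sphere_bound n x y Hx Hy) as Hb.
  pose proof (acos_bound (dot n x y)). unfold sdist.
  rewrite <- (cos_acos (dot n x y)) in Hc by exact Hb.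
  destruct (Rlt_le_dec (acos (dot n x y)) e) as [Hlt|Hle]; [exact Hlt|].
  destruct (Req_dec (acos (dot n x y)) e) as [<-|Hne]; [lra|].
  assert (cos (acos (dot n x y)) < cos e) by (apply cos_decreasing_1; lra). lra.
Qed.

(* [1 - cos e = 2 sin (e/2)^2 <= e^2 / 2]. *)
Lemma one_sub_cos_small th : 0 < th -> exists e, 0 < e <= 1 /\ 1 - cos e < th.
Proof.
  intros Hth. set (e := Rmin 1 th). exists e.
  assert (He : 0 < e <= 1 /\ e <= th) by (unfold e, Rmin; destruct Rle_dec; lra).
  split; [lra|]. pose proof PI2_1.
  replace e with (2 * (e / 2)) by field. rewrite cos_2a_sin.
  pose proof (sin_lt_x (e / 2) ltac:(lra)). pose proof (sin_ge_0 (e / 2) ltac:(lra) ltac:(lra)).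
  nra.
Qed.

Lemma dot_close_of_sdist_small n eta : 0 < eta ->
  exists e, 0 < e <= 1 /\ forall A x y, sphere n A -> sphere n x -> sphere n y ->
    sdist n x y <= e -> Rabs (dot n A x - dot n A y) < eta.
Proof.
  intros Heta. destruct (one_sub_cos_small (eta ^ 2 / 2)) as [e [He Hcos]]; [nra|].
  exists e. split; [exact He|]. intros A x y [_ HA] Hx Hy Hs. pose proof PI2_1.
  pose proof (cos_le_dot_of_sdist_le n x y e Hx Hy ltac:(lra) Hs).
  pose proof (dot_diff_sq_le n A x y HA Hx Hy).
  apply Rabs_def1; nra.
Qed.

Lemma closed_in_sphere_dot_limit n A (x : nat -> vec) y :
  closed_in_sphere n A -> sphere n y -> (forall k, A (x k)) ->
  Un_cv (fun k => dot n (x k) y) 1 -> A y.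
Proof.
  intros [Hsub Hcl] Hy Hx Hcv. apply (Hcl x y Hx Hy). intros eps Heps.
  set (e := Rmin eps 1). pose proof PI2_1.
  assert (He : 0 < e <= 1 /\ e <= eps) by (unfold e, Rmin; destruct Rle_dec; lra).
  assert (Hcos : cos e < 1) by (rewrite <- cos_0; apply cos_decreasing_1; lra).
  destruct (Hcv (1 - cos e)) as [N HN]; [lra|].
  exists N. intros k Hk. specialize (HN k Hk). unfold Rdist in HN. apply Rabs_def2 in HN.
  assert (sdist n (x k) y < e) by (apply sdist_lt_of_cos_lt; auto; lra). lra.
Qed.

Lemma Un_cv_const c : Un_cv (fun _ => c) c.
Proof. intros eps Heps. exists 0%nat. intros k _. unfold Rdist. rewrite Rminus_diag, Rabs_R0. lra. Qed.

Lemma Un_cv_subseq (u : nat -> R) l psi :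
  (forall k, (k <= psi k)%nat) -> Un_cv u l -> Un_cv (fun k => u (psi k)) l.
Proof.
  intros Hpsi Hu eps Heps. destruct (Hu eps Heps) as [N HN].
  exists N. intros k Hk. apply HN. specialize (Hpsi k). lia.
Qed.

Lemma Un_cv_inv_succ : Un_cv (fun k => / (INR k + 1)) 0.
Proof.
  intros eps Heps. destruct (archimed_cor1 eps Heps) as [N [HN HN0]].
  exists N. intros k Hk. unfold Rdist. pose proof (pos_INR k).
  rewrite Rminus_0_r, Rabs_pos_eq by (left; apply Rinv_0_lt_compat; lra).
  apply Rle_lt_trans with (/ INR N); [|exact HN].
  apply Rinv_le_contravar; [apply lt_0_INR; lia|]. apply le_INR in Hk. lra.
Qed.

Lemma Un_cv_dot n (a b : nat -> vec) (a' b' : vec) :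
  (forall j, (j <= n)%nat -> Un_cv (fun k => a k j) (a' j)) ->
  (forall j, (j <= n)%nat -> Un_cv (fun k => b k j) (b' j)) ->
  Un_cv (fun k => dot n (a k) (b k)) (dot n a' b').
Proof.
  unfold dot. induction n as [|n IH]; intros Ha Hb; simpl.
  - apply CV_mult; auto.
  - apply CV_plus; [apply IH; auto|apply CV_mult; auto].
Qed.

(* [psi] need not be increasing: [k <= psi k] is all [Un_cv_subseq] needs. *)
Lemma bounded_extraction (u : nat -> R) M : (forall k, Rabs (u k) <= M) ->
  exists psi : nat -> nat, (forall k, (k <= psi k)%nat) /\ exists l, Un_cv (fun k => u (psi k)) l.
Proof.
  intros Hu.
  destruct (Bolzano_Weierstrass u (fun c => -M <= c <= M) (compact_P3 (-M) M)) as [l Hl].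
  { intro k. specialize (Hu k). unfold Rabs in Hu. destruct (Rcase_abs (u k)); lra. }
  assert (Hclose : forall k, exists p, (k <= p)%nat /\ Rabs (u p - l) < / (INR k + 1)).
  { intro k. assert (Hpos : 0 < / (INR k + 1)) by (pose proof (pos_INR k); apply Rinv_0_lt_compat; lra).
    destruct (Hl (disc l (mkposreal _ Hpos)) k) as [p [Hp1 Hp2]].
    - exists (mkposreal _ Hpos). intros y Hy; exact Hy.
    - exists p. split; auto. }
  destruct (choice _ Hclose) as [psi Hpsi]. exists psi. split; [intro k; apply Hpsi|].
  exists l. intros eps Heps. destruct (Un_cv_inv_succ eps Heps) as [N HN].
  exists N. intros k Hk. specialize (HN k Hk). unfold Rdist in *.
  rewrite Rminus_0_r, Rabs_pos_eq in HN by (left; pose proof (pos_INR k); apply Rinv_0_lt_compat; lra).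
  pose proof (proj2 (Hpsi k)). lra.
Qed.

Lemma bounded_extraction_vec (xs : nat -> vec) M : (forall k j, Rabs (xs k j) <= M) ->
  forall m, exists phi : nat -> nat, (forall k, (k <= phi k)%nat) /\
    exists l : vec, forall j, (j < m)%nat -> Un_cv (fun k => xs (phi k) j) (l j).
Proof.
  intros Hb m. induction m as [|m [phi [Hphi [l Hl]]]].
  - exists (fun k => k). split; [auto|]. exists (fun _ => 0). intros; lia.
  - destruct (bounded_extraction (fun k => xs (phi k) m) M) as [psi [Hpsi [lm Hlm]]]; [intro; apply Hb|].
    exists (fun k => phi (psi k)). split.
    + intro k. specialize (Hpsi k). specialize (Hphi (psi k)). lia.
    + exists (fun j => if Nat.eq_dec j m then lm else l j). intros j Hj.
      destruct (Nat.eq_dec j m) as [->|Hne]; [exact Hlm|].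
      apply (Un_cv_subseq (fun k => xs (phi k) j)); [exact Hpsi|]. apply Hl. lia.
Qed.

Lemma closed_in_sphere_extraction n X (xs : nat -> vec) :
  closed_in_sphere n X -> (forall k, X (xs k)) ->
  exists (phi : nat -> nat) (y : vec), (forall k, (k <= phi k)%nat) /\ X y /\
    forall j, (j <= n)%nat -> Un_cv (fun k => xs (phi k) j) (y j).
Proof.
  intros [Hsub Hcl] Hxs.
  destruct (bounded_extraction_vec xs 1 (fun k j => sphere_coord_bound n _ j (Hsub _ (Hxs k))) (S n))
    as [phi [Hphi [l Hl]]].
  set (y := fun j => if Nat.leb j n then l j else 0).
  assert (Hcv : forall j, (j <= n)%nat -> Un_cv (fun k => xs (phi k) j) (y j)).
  { intros j Hj. unfold y. replace (Nat.leb j n) with true by (symmetry; apply Nat.leb_le; exact Hj).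
    apply Hl. lia. }
  assert (Hcst : forall j, Un_cv (fun _ : nat => y j) (y j)) by (intro; apply Un_cv_const).
  assert (Hy : sphere n y).
  { split.
    - intros i Hi. unfold y. replace (Nat.leb i n) with false by (symmetry; apply Nat.leb_gt; exact Hi).
      reflexivity.
    - apply (UL_sequence (fun k => dot n (xs (phi k)) (xs (phi k)))); [apply Un_cv_dot; auto|].
      intros eps Heps. exists 0%nat. intros k _. unfold Rdist.
      rewrite (proj2 (Hsub _ (Hxs (phi k)))), Rminus_diag, Rabs_R0. exact Heps. }
  exists phi, y. repeat split; [exact Hphi| |exact Hcv].
  apply (closed_in_sphere_dot_limit n X (fun k => xs (phi k)) y (conj Hsub Hcl) Hy); [intro; apply Hxs|].
  rewrite <- (proj2 Hy). apply Un_cv_dot; auto.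
Qed.

Definition maximizes n (X : vset) Q x0 : Prop :=
  X x0 /\ forall x, X x -> dot n Q x <= dot n Q x0.

Lemma maximizer_exists n X Q : in_HS n X -> sphere n Q -> exists x0, maximizes n X Q x0.
Proof.
  intros [[p Hp] HX] HQ. pose proof (proj1 HX) as Hsub.
  set (E := fun r => exists x, X x /\ r = dot n Q x).
  destruct (completeness E) as [s [Hub Hlub]].
  { exists 1. intros r [x [Hx ->]]. apply (dot_sphere_bound n Q x HQ (Hsub x Hx)). }
  { exists (dot n Q p), p. auto. }
  assert (Hnear : forall k, exists x, X x /\ s - / (INR k + 1) <= dot n Q x).
  { intro k. apply NNPP. intros Hno.
    assert (Hpos : 0 < / (INR k + 1)) by (pose proof (pos_INR k); apply Rinv_0_lt_compat; lra).
    enough (s <= s - / (INR k + 1)) by lra.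
    apply Hlub. intros r [x [Hx ->]]. apply Rnot_lt_le. intros Hlt. apply Hno. exists x. split; [exact Hx|lra]. }
  destruct (choice _ Hnear) as [xs Hxs].
  destruct (closed_in_sphere_extraction n X xs HX (fun k => proj1 (Hxs k))) as [phi [y [Hphi [Hy Hcv]]]].
  exists y. split; [exact Hy|]. intros x Hx.
  apply Rle_trans with s; [apply Hub; exists x; auto|].
  apply (@Rle_cv_lim (fun k => s - / (INR (phi k) + 1)) (fun k => dot n Q (xs (phi k)))).
  - intro k. apply Hxs.
  - pose proof (CV_minus _ _ s 0 (Un_cv_const s)
      (Un_cv_subseq (fun k => / (INR k + 1)) 0 phi Hphi Un_cv_inv_succ)) as Hlim.
    rewrite Rminus_0_r in Hlim. exact Hlim.
  - apply Un_cv_dot; [intros; apply Un_cv_const|exact Hcv].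
Qed.

Lemma polar_polar_of_mem n X Q : subset_sphere n X -> X Q -> polar n (polar n X) Q.
Proof.
  intros Hsub HQ. split; [exact (Hsub Q HQ)|]. intros P [HP HPX]. split; [exact (Hsub Q HQ)|].
  rewrite dot_comm. apply HPX, HQ.
Qed.

Lemma polar_normalize n X V :
  (forall i, (n < i)%nat -> V i = 0) -> 0 < dot n V V ->
  (forall x, X x -> 0 <= dot n V x) -> polar n X (normalize n V).
Proof.
  intros Hz HV HVX. pose proof (sphere_normalize n V Hz HV) as HR.
  split; [exact HR|]. intros P HP. split; [exact HR|].
  unfold normalize. rewrite dot_div_r, dot_comm. apply Rle_ge, Rmult_le_pos.
  - apply HVX, HP.
  - left. apply Rinv_0_lt_compat, sqrt_lt_R0, HV.
Qed.

(* The property of the Hausdorff limit that replaces convexity: [X] lies in the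
   half-space [(c x0 - Q) . x >= 0], where [x0] maximizes [c = Q . x0 > 0] on [X]. *)
Definition maximizer_dominates n (X : vset) : Prop :=
  forall Q x0 x, sphere n Q -> maximizes n X Q x0 -> 0 < dot n Q x0 -> X x ->
    dot n Q x <= dot n Q x0 * dot n x0 x.

(* With [c = Q . x0 < 1] and [c+ = max 0 c], the vector [c+ x0 - Q] is nonnegative
   on [X] but negative at [Q]; normalized, it is a point of [X°] separating [Q]. *)
Lemma mem_of_polar_polar n X Q :
  in_HS n X -> maximizer_dominates n X -> polar n (polar n X) Q -> X Q.
Proof.
  intros HX Hdom [HQ HQpp]. pose proof (proj1 (proj2 HX)) as Hsub.
  destruct (maximizer_exists n X Q HX HQ) as [x0 [Hx0 Hmax]].
  pose proof (Hsub x0 Hx0) as S0.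
  destruct (dot_sphere_bound n Q x0 HQ S0) as [_ [Hc1|Hc1]].
  2: { apply (closed_in_sphere_dot_limit n X (fun _ => x0) Q (proj2 HX) HQ (fun _ => Hx0)).
       rewrite dot_comm, Hc1. apply Un_cv_const. }
  exfalso. set (c := dot n Q x0) in *.
  set (cp := Rmax 0 c).
  assert (Hcp : (cp = 0 /\ c <= 0) \/ (cp = c /\ 0 < c)).
  { unfold cp. destruct (Rle_lt_dec c 0); [left; rewrite Rmax_left|right; rewrite Rmax_right]; lra. }
  set (V := fun j => cp * x0 j + -1 * Q j).
  assert (HVx : forall x, dot n V x = cp * dot n x0 x - dot n Q x) by (intro; unfold V; rewrite dot_lincomb_l; ring).
  assert (HVQ : dot n Q V = cp * c - 1) by (rewrite dot_comm, HVx, (dot_comm n x0 Q), (proj2 HQ); reflexivity).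
  assert (HVV : 0 < dot n V V).
  { unfold V at 2. rewrite dot_lincomb_r, !HVx, (proj2 S0), (proj2 HQ), (dot_comm n x0 Q). fold c.
    destruct Hcp as [[-> ?]|[-> ?]]; nra. }
  assert (HR : polar n X (normalize n V)).
  { apply polar_normalize.
    - intros i Hi. unfold V. rewrite (proj1 S0 i Hi), (proj1 HQ i Hi). ring.
    - exact HVV.
    - intros x Hx. rewrite HVx. destruct Hcp as [[Hcp Hc]|[Hcp Hc]]; rewrite Hcp.
      + pose proof (Hmax x Hx) as Hle. fold c in Hle. lra.
      + pose proof (Hdom Q x0 x HQ (conj Hx0 Hmax) Hc Hx) as Hle. fold c in Hle. lra. }
  destruct (HQpp _ HR) as [_ HQR]. unfold normalize in HQR.
  rewrite dot_comm, dot_div_r, HVQ in HQR.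
  enough ((cp * c - 1) / vnorm n V < 0) by lra.
  apply Rdiv_neg_pos; [destruct Hcp as [[-> ?]|[-> ?]]; nra|].
  apply sqrt_lt_R0, HVV.
Qed.

(* [L(t) = (1-t) c + t a] against [c |(1-t) x0 + t x|]: both equal [c] at [t = 0],
   and comparing their derivatives there gives [a - c <= c (b - 1)]. *)
Lemma le_of_mix_sq_le c a b : 0 < c <= 1 -> -1 <= a <= 1 -> -1 <= b <= 1 ->
  (forall t, 0 < t <= 1/3 -> 0 < (1 - t) * c + t * a ->
     ((1 - t) * c + t * a) ^ 2 <= c ^ 2 * mix_norm2 t b) ->
  a <= c * b.
Proof.
  intros Hc Ha Hb H. apply Rnot_lt_le. intros Hlt.
  set (d := a - c * b). assert (Hd : 0 < d <= 2) by (unfold d; nra).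
  set (t := Rmin (1/3) (c * d / 4)).
  assert (Ht : 0 < t <= 1/3 /\ t <= c * d / 4) by (unfold t, Rmin; destruct Rle_dec; nra).
  assert (HL : 0 < (1 - t) * c + t * a) by nra.
  specialize (H t (proj1 Ht) HL). unfold mix_norm2 in H.
  assert (E : ((1 - t) * c + t * a) ^ 2 - c ^ 2 * ((1 - t) ^ 2 + t ^ 2 + 2 * t * (1 - t) * b)
              = t * (2 * (1 - t) * c * d + t * (a * a - c * c))) by (unfold d; ring).
  assert (a * a - c * c >= -1) by nra.
  assert (t * (a * a - c * c) >= - t) by nra.
  assert (0 < 2 * (1 - t) * c * d + t * (a * a - c * c)) by nra.
  nra.
Qed.

Lemma sq_le_of_approx L c N : 0 < L <= 1 -> 0 < c <= 1 -> 0 <= N <= 1 ->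
  (forall eta, 0 < eta <= 1 -> eta < L / 4 -> L - eta <= (c + eta) * sqrt (N + eta)) ->
  L ^ 2 <= c ^ 2 * N.
Proof.
  intros HL Hc HN H. apply Rnot_lt_le. intros Hlt.
  set (d := L ^ 2 - c ^ 2 * N).
  set (eta := Rmin (Rmin 1 (L / 8)) (d / 20)).
  assert (He : 0 < eta /\ eta <= 1 /\ eta <= L / 8 /\ eta <= d / 20)
    by (unfold eta, d, Rmin in *; repeat destruct Rle_dec; lra).
  specialize (H eta ltac:(lra) ltac:(lra)).
  pose proof (sqrt_pos (N + eta)) as Hs0. pose proof (sqrt_sqrt (N + eta) ltac:(lra)) as Hs.
  assert (Hsq : (L - eta) ^ 2 <= (c + eta) ^ 2 * (N + eta)).
  { rewrite <- Hs. replace ((c + eta) ^ 2 * (sqrt (N + eta) * sqrt (N + eta)))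
      with (((c + eta) * sqrt (N + eta)) ^ 2) by ring. apply pow_incr. lra. }
  assert ((c + eta) ^ 2 <= c ^ 2 + 3 * eta) by nra.
  assert ((c + eta) ^ 2 * (N + eta) <= c ^ 2 * N + 7 * eta) by nra.
  assert ((L - eta) ^ 2 >= L ^ 2 - 2 * eta) by nra.
  unfold d in *. lra.
Qed.

Section HausdorffLimit.

Variables (n : nat) (Xs : nat -> vset) (X : vset).
Hypothesis HXs : forall i, (1 <= i)%nat -> spherical_convex n (Xs i).
Hypothesis HXsub : subset_sphere n X.
Hypothesis Hconv : hausdorff_converges n Xs X.

(* Approximate [x0, x] by [x0', x'] in some [Xs i]; the arc point of [x0', x'] lies in
   [Xs i], hence near a point of [X], where [Q] is at most [Q . x0]. *)
Lemma limit_mix_estimate Q x0 x t eta :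
  sphere n Q -> maximizes n X Q x0 -> X x -> 0 <= t < 1/2 -> 0 < eta ->
  exists c' a' b', Rabs (c' - dot n Q x0) < eta /\ Rabs (a' - dot n Q x) < eta /\
    Rabs (b' - dot n x0 x) < 2 * eta /\ -1 <= b' <= 1 /\
    (1 - t) * c' + t * a' <= (dot n Q x0 + eta) * sqrt (mix_norm2 t b').
Proof.
  intros HQ [Hx0 Hmax] Hx Ht Heta.
  destruct (dot_close_of_sdist_small n eta Heta) as [e [He Hclose]].
  destruct (Hconv e ltac:(lra)) as [N HN].
  destruct (HN (Nat.max N 1) ltac:(lia)) as [Hto Hfrom].
  destruct (HXs (Nat.max N 1) ltac:(lia)) as [Hisub [_ Hiarc]].
  destruct (Hfrom x0 Hx0) as [x0' [Hx0' Hd0]].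
  destruct (Hfrom x Hx) as [x' [Hx' Hd1]].
  set (u := normalize n (fun j => (1 - t) * x0' j + t * x' j)).
  assert (Hu : Xs (Nat.max N 1) u) by (apply (Hiarc x0' x' Hx0' Hx'); exists t; split; [lra|reflexivity]).
  destruct (Hto u Hu) as [z [Hz Hdz]].
  pose proof (HXsub _ Hx0) as S0. pose proof (HXsub _ Hx) as S1. pose proof (HXsub _ Hz) as Sz.
  pose proof (Hisub _ Hx0') as S0'. pose proof (Hisub _ Hx') as S1'. pose proof (Hisub _ Hu) as Su.
  exists (dot n Q x0'), (dot n Q x'), (dot n x0' x').
  pose proof (dot_sphere_bound n x0' x' S0' S1') as Hb'.
  repeat split; try apply Hb'.
  - apply (Hclose Q x0' x0 HQ S0' S0 Hd0).
  - apply (Hclose Q x' x HQ S1' S1 Hd1).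
  - pose proof (Hclose x' x0' x0 S1' S0' S0 Hd0) as H1.
    pose proof (Hclose x0 x' x S0 S1' S1 Hd1) as H2.
    rewrite (dot_comm n x' x0'), (dot_comm n x' x0) in H1.
    apply Rabs_def2 in H1. apply Rabs_def2 in H2. apply Rabs_def1; lra.
  - assert (HN' : 0 < mix_norm2 t (dot n x0' x')) by (apply mix_norm2_pos; lra).
    pose proof (sqrt_lt_R0 _ HN') as Hs.
    pose proof (Hclose Q u z HQ Su Sz Hdz) as Huz. apply Rabs_def2 in Huz.
    pose proof (Hmax z Hz).
    unfold u in Huz. rewrite dot_normalize_mix in Huz by (apply S0' || apply S1').
    set (s := sqrt (mix_norm2 t (dot n x0' x'))) in *.
    set (L' := (1 - t) * dot n Q x0' + t * dot n Q x') in *.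
    replace L' with (L' / s * s) by (field; lra).
    apply Rmult_le_compat_r; lra.
Qed.

Lemma hausdorff_limit_maximizer_dominates : maximizer_dominates n X.
Proof.
  intros Q x0 x HQ Hmx Hc Hx.
  pose proof (HXsub _ (proj1 Hmx)) as S0. pose proof (HXsub _ Hx) as S1.
  pose proof (dot_sphere_bound n Q x0 HQ S0). pose proof (dot_sphere_bound n Q x HQ S1).
  pose proof (dot_sphere_bound n x0 x S0 S1).
  set (c := dot n Q x0) in *. set (a := dot n Q x) in *. set (b := dot n x0 x) in *.
  apply le_of_mix_sq_le; try lra. intros t Ht HL.
  apply sq_le_of_approx; [nra|lra|apply mix_norm2_bounds; lra|].
  intros eta He HeL.
  destruct (limit_mix_estimate Q x0 x t eta HQ Hmx Hx ltac:(lra) (proj1 He))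
    as [c' [a' [b' [Hc' [Ha' [Hb' [Hb'1 Hest]]]]]]].
  fold c a b in Hc', Ha', Hb', Hest.
  apply Rabs_def2 in Hc'. apply Rabs_def2 in Ha'. apply Rabs_def2 in Hb'.
  assert (HL' : (1 - t) * c + t * a - eta <= (1 - t) * c' + t * a') by nra.
  assert (HN' : mix_norm2 t b' <= mix_norm2 t b + eta).
  { replace (mix_norm2 t b') with (mix_norm2 t b + 2 * (t * (1 - t)) * (b' - b))
      by (unfold mix_norm2; ring).
    assert (Htt : 0 <= t * (1 - t) <= 1/4) by nra.
    assert (t * (1 - t) * (b' - b) <= t * (1 - t) * (2 * eta)) by (apply Rmult_le_compat_l; lra).
    nra. }
  assert (Hsqrt : sqrt (mix_norm2 t b') <= sqrt (mix_norm2 t b + eta))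
    by (apply sqrt_le_1_alt, HN').
  apply Rle_trans with ((1 - t) * c' + t * a'); [exact HL'|].
  apply Rle_trans with ((c + eta) * sqrt (mix_norm2 t b')); [exact Hest|].
  apply Rmult_le_compat_l; lra.
Qed.

End HausdorffLimit.

Theorem lemma5 (n : nat) (Hn : (1 <= n)%nat) (Xs : nat -> vset) (X : vset) :
  (forall i, (1 <= i)%nat -> in_Hsconv n (Xs i)) ->
  in_HS n X ->
  hausdorff_converges n Xs X ->
  forall Q, X Q <-> polar n (polar n X) Q.
Proof.
  intros HXs HX Hconv Q. split.
  - apply polar_polar_of_mem, (proj1 (proj2 HX)).
  - apply mem_of_polar_polar; [exact HX|].
    apply (hausdorff_limit_maximizer_dominates n Xs X); [|apply HX|exact Hconv].
    intros i Hi. apply (HXs i Hi).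
Qed.
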